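(* Let $\mathcal{H}$ be a finite-dimensional Hilbert space, $H_0$ a Hermitian operator with ground energy $E_0$, ground-space projection $P_0$ and $Q_0=I-P_0$, and $V$ a Hermitian operator. Let $G=Q_0(E_0I-H_0)^{-1}Q_0$ (inverse taken on the range of $Q_0$). Let $L\geq 2$ be an integer such that for every $n<L$ and all choices $Z_1,\dots,Z_{n-1}\in\{P_0,Q_0\}\cup\{G^m: m\in\mathbb{N}\}$, one has $P_0VZ_1VZ_2\cdots Z_{n-1}VP_0\in\mathbb{C}P_0$ (equivalently, $P_0\Gamma(n)P_0\subseteq\mathbb{C}P_0$ for all $n<L$, with $\Gamma(n)$ as in the context). Then the Schrieffer–Wolff effective Hamiltonian coefficients satisfy $H_{\mathrm{eff},1}=P_0VP_0\in\mathbb{C}P_0$ and $H_{\mathrm{eff},q}\in\mathbb{C}P_0$ for all $2\le q<L$ (so the effective Hamiltonian $H_{\mathrm{eff}}^{(n)}=E_0P_0+\sum_{q=1}^n\epsilon^qH_{\mathrm{eff},q}$ is proportional to $P_0$ for all $n<L$), and $$H_{\mathrm{eff},L}\in P_0(VG)^{L-1}VP_0+\mathbb{C}P_0,$$ where $(VG)^{L-1}V$ contains $L$ factors of $V$.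
   Context: Notation. $\Gamma(n)$ is the linear span of operators $Z_0VZ_1V\cdots Z_{n-1}VZ_n$ with each $Z_j\in\{P_0,Q_0\}\cup\{G^m:m\in\mathbb{N}\}$. Set $V_{\mathrm d}=P_0VP_0+Q_0VQ_0$, $V_{\mathrm{od}}=P_0VQ_0+Q_0VP_0$, $\mathcal{L}(X)=P_0XG-GXP_0$, $\mathrm{ad}_S(X)=[S,X]$. Let $\beta_m$ be the Bernoulli numbers ($\beta_2=1/6$), $a_m=2^m\beta_m/m!$, and $b_{2n-1}=2(2^{2n}-1)\beta_{2n}/(2n)!$ (so $b_1=1/2$). Define recursively $S_1=\mathcal{L}(V_{\mathrm{od}})$, $S_2=-\mathcal{L}(\mathrm{ad}_{V_{\mathrm d}}(S_1))$, and for $n\ge 3$, $S_n=-\mathcal{L}(\mathrm{ad}_{V_{\mathrm d}}(S_{n-1}))+\sum_{j\ge1}a_{2j}\mathcal{L}(\hat S^{2j}(V_{\mathrm{od}})_{n-1})$, where $\hat S^k(V_{\mathrm{od}})_m=\sum_{n_1,\dots,n_k\ge1,\ \sum_r n_r=m}\mathrm{ad}_{S_{n_1}}\cdots\mathrm{ad}_{S_{n_k}}(V_{\mathrm{od}})$ (which is $0$ if $k>m$). The Schrieffer–Wolff effective Hamiltonian expansion is $H_{\mathrm{eff}}^{(n)}=H_0P_0+\epsilon P_0VP_0+\sum_{q=2}^n\epsilon^qH_{\mathrm{eff},q}$ with $H_{\mathrm{eff},1}=P_0VP_0$ and $H_{\mathrm{eff},q}=\sum_{1\le j\le\lfloor q/2\rfloor}b_{2j-1}P_0\hat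 S^{2j-1}(V_{\mathrm{od}})_{q-1}P_0$ for $q\ge2$. *)

(* operators on a finite-dimensional Hilbert space are
   N x N complex matrices, with scalars in algC (algebraic complex numbers,
   a numClosedFieldType with conjugation x^* ). *)
From HB Require Import structures.
From mathcomp Require Import all_boot all_order all_algebra all_field.
Set Implicit Arguments. Unset Strict Implicit. Unset Printing Implicit Defensive.
Import Order.TTheory GRing.Theory Num.Theory.
Local Open Scope ring_scope.

Section SW.
Variable N : nat.
Notation M := 'M[algC]_N.

Definition adjointmx (A : M) : M := (map_mx (fun x : algC => x^*) A)^T.
Definition is_hermitian_op (A : M) : Prop := adjointmx A = A.

Definition mxpow (A : M) (k : nat) : M := iter k (fun B => A *m B) 1%:M.

(* Bernoulli numbers: beta_0 = 1, sum_{k<=m} C(m+1,k) beta_k = 0 for m >= 1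
   (beta_1 = -1/2, beta_2 = 1/6; only even indices are used below). *)
Fixpoint bern_list (m : nat) : seq algC :=
  match m with
  | 0 => [:: 1]
  | m'.+1 =>
      let s := bern_list m' in
      rcons s (- (m'.+2)%:R^-1 *
               \sum_(k < m'.+1) ('C(m'.+2, k))%:R * s`_k)
  end.
Definition bernoulli (m : nat) : algC := (bern_list m)`_m.

Definition acoef (m : nat) : algC := 2 ^+ m * bernoulli m / (m`!)%:R.
(* bcoef n = b_{2n-1} = 2 (2^{2n} - 1) beta_{2n} / (2n)! *)
Definition bcoef (n : nat) : algC :=
  2 * (2 ^+ (2 * n) - 1) * bernoulli (2 * n) / ((2 * n)`!)%:R.

Variables (P0 G V : M).
Definition Q0 : M := 1%:M - P0.
Definition Vd : M := P0 *m V *m P0 + Q0 *m V *m Q0.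
Definition Vod : M := P0 *m V *m Q0 + Q0 *m V *m P0.
Definition Lsw (X : M) : M := P0 *m X *m G - G *m X *m P0.
Definition admx (S X : M) : M := S *m X - X *m S.

(* hatS S k m = sum over n_1..n_k >= 1 with n_1+..+n_k = m of
   ad_{S n_1} ... ad_{S n_k} (Vod) *)
Fixpoint hatS (S : nat -> M) (k m : nat) : M :=
  match k with
  | 0 => if m == 0%N then Vod else 0
  | k'.+1 => \sum_(1 <= n1 < m.+1) admx (S n1) (hatS S k' (m - n1))
  end.

Definition Sof (s : seq M) (i : nat) : M := nth 0 s i.-1.

(* S_n computed from s = [:: S_1; ...; S_(n-1)] *)
Definition Snext (s : seq M) (n : nat) : M :=
  if n == 1%N then Lsw Vod
  else - Lsw (admx Vd (Sof s n.-1))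
       + \sum_(1 <= j < n) acoef (2 * j) *: Lsw (hatS (Sof s) (2 * j) n.-1).

Fixpoint Slist (n : nat) : seq M :=
  match n with
  | 0 => [::]
  | n'.+1 => rcons (Slist n') (Snext (Slist n') n'.+1)
  end.

Definition Ssw (n : nat) : M := Sof (Slist n) n.

(* H_eff,q for q >= 2 *)
Definition Heff (q : nat) : M :=
  \sum_(1 <= j < (q./2).+1)
     bcoef j *: (P0 *m hatS Ssw (2 * j).-1 q.-1 *m P0).

Definition isZ (Z : M) : Prop :=
  Z = P0 \/ Z = Q0 \/ exists m, (0 < m)%N /\ Z = mxpow G m.

Definition chain (zs : seq M) : M :=
  foldl (fun acc Z => acc *m Z *m V) (P0 *m V) zs *m P0.
End SW.

(* Call a product Z_0 V Z_1 V ... V Z_n with every Z_i in {P0, Q0, G^m}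
   a word of degree n, and work modulo the span D_n of the words of degree n
   with an interior factor P0.  As P0 G = G P0 = P0 Q0 = 0, modulo D_n one
   finds S_n = P0 (VG)^(n-1) V G - G (VG)^(n-1) V P0: the commutator with V_d
   moves this leading term one degree up, and every nested commutator
   ad_{S_n1} ... ad_{S_nk} (V_od) with k >= 2 vanishes modulo D, because
   P0 (VG)^b V P0 multiplied on either side by a leading term is zero or
   passes through P0.  Hence, as b_1 = 1/2, H_eff,q = P0 (VG)^(q-1) V P0
   modulo D_q.  Finally P0 w P0 is a multiple of P0 for every word w of degree
   q < L by hypothesis, and for every element of D_L, since a word with an
   interior P0 factors into two words of degree < L. *)

From Pilot Require Import Defs.
From HB Require Import structures.
From mathcomp Require Import all_boot all_order all_algebra all_field.
From mathcomp Require Import zify ring.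
Set Implicit Arguments. Unset Strict Implicit. Unset Printing Implicit Defensive.
Import Order.TTheory GRing.Theory Num.Theory.
Local Open Scope ring_scope.

Section MatrixPowers.
Variable N : nat.
Implicit Types (A : 'M[algC]_N) (m n : nat).

Lemma mxpowS A m : mxpow A m.+1 = A *m mxpow A m.
Proof. by []. Qed.

Lemma mxpow1 A : mxpow A 1 = A.
Proof. by rewrite mxpowS mulmx1. Qed.

Lemma mxpowD A m n : mxpow A m *m mxpow A n = mxpow A (m + n).
Proof.
elim: m => [|m IH]; first exact: mul1mx.
by rewrite mxpowS -mulmxA IH.
Qed.

Lemma mxpowSr A m : mxpow A m.+1 = mxpow A m *m A.
Proof. by rewrite -addn1 -mxpowD mxpow1. Qed.

End MatrixPowers.

Lemma bcoef1 : bcoef 1 = 2^-1.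
Proof.
rewrite /bcoef /bernoulli /= !big_ord_recr !big_ord0 /= !add0r.
rewrite !(mul1n, muln1, mul0n) !bin0 bin1 (_ : 2`! = 2)%N //.
by field.
Qed.

Section Words.
Variable N : nat.
Local Notation M := 'M[algC]_N.
Variables P0 G V : M.
Hypothesis P0_idem : P0 *m P0 = P0.
Hypothesis Q0G : Q0 P0 *m G = G.
Hypothesis GQ0 : G *m Q0 P0 = G.

Local Notation Q0 := (Q0 P0).
Local Notation isZ := (isZ P0 G).

Lemma P0Q0 : P0 *m Q0 = 0.
Proof. by rewrite mulmxBr mulmx1 P0_idem subrr. Qed.

Lemma Q0P0 : Q0 *m P0 = 0.
Proof. by rewrite mulmxBl mul1mx P0_idem subrr. Qed.

Lemma Q0_idem : Q0 *m Q0 = Q0.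
Proof. by rewrite {1}/Q0 mulmxBl mul1mx P0Q0 subr0. Qed.

Lemma P0G : P0 *m G = 0.
Proof. by rewrite -Q0G mulmxA P0Q0 mul0mx. Qed.

Lemma GP0 : G *m P0 = 0.
Proof. by rewrite -GQ0 -mulmxA Q0P0 mulmx0. Qed.

Lemma P0_mxpow m : P0 *m mxpow G m.+1 = 0.
Proof. by rewrite mxpowS mulmxA P0G mul0mx. Qed.

Lemma mxpow_P0 m : mxpow G m.+1 *m P0 = 0.
Proof. by rewrite mxpowSr -mulmxA GP0 mulmx0. Qed.

Lemma Q0_mxpow m : Q0 *m mxpow G m.+1 = mxpow G m.+1.
Proof. by rewrite mxpowS mulmxA Q0G. Qed.

Lemma mxpow_Q0 m : mxpow G m.+1 *m Q0 = mxpow G m.+1.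
Proof. by rewrite mxpowSr -mulmxA GQ0. Qed.

Lemma isZ_P0 : isZ P0. Proof. by left. Qed.
Lemma isZ_Q0 : isZ Q0. Proof. by right; left. Qed.
Lemma isZ_G : isZ G. Proof. by right; right; exists 1%N; rewrite mxpow1. Qed.

Lemma isZ_mul x y : isZ x -> isZ y -> x *m y = 0 \/ isZ (x *m y).
Proof.
move=> [->|[->|[[|m] [// _ ->]]]] [->|[->|[[|m'] [// _ ->]]]].
- by right; rewrite P0_idem; left.
- by left; rewrite P0Q0.
- by left; rewrite P0_mxpow.
- by left; rewrite Q0P0.
- by right; rewrite Q0_idem; right; left.
- by right; rewrite Q0_mxpow; right; right; exists m'.+1.
- by left; rewrite mxpow_P0.
- by right; rewrite mxpow_Q0; right; right; exists m.+1.
- by right; rewrite mxpowD; right; right; exists (m.+1 + m'.+1)%N.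
Qed.

Lemma P0_mul_isZ x : isZ x -> P0 *m x = P0 \/ P0 *m x = 0.
Proof.
move=> [->|[->|[[|m] [// _ ->]]]]; first by left.
  by right; rewrite P0Q0.
by right; rewrite P0_mxpow.
Qed.

Lemma isZ_mul_P0 x : isZ x -> x *m P0 = P0 \/ x *m P0 = 0.
Proof.
move=> [->|[->|[[|m] [// _ ->]]]]; first by left.
  by right; rewrite Q0P0.
by right; rewrite mxpow_P0.
Qed.

Fixpoint vprod (l : seq M) : M :=
  match l with
  | [::] => 0
  | z :: l' => if l' is [::] then z else z *m V *m vprod l'
  end.

Lemma vprod_cons z l : l != [::] -> vprod (z :: l) = z *m V *m vprod l.
Proof. by case: l. Qed.

Lemma vprod_mull x y t : x *m vprod (y :: t) = vprod (x *m y :: t).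
Proof. by case: t => [|a t] //=; rewrite !mulmxA. Qed.

Lemma vprod_mulr s x y : vprod (rcons s x) *m y = vprod (rcons s (x *m y)).
Proof.
elim: s => [//|z s IH]; rewrite !rcons_cons.
by rewrite !vprod_cons -?size_eq0 ?size_rcons // -mulmxA IH.
Qed.

Lemma vprod_cat s x y t :
  vprod (rcons s x) *m vprod (y :: t) = vprod (s ++ x *m y :: t).
Proof.
elim: s => [|z s IH]; first exact: vprod_mull.
rewrite rcons_cons vprod_cons -?size_eq0 ?size_rcons // -mulmxA IH.
by rewrite cat_cons vprod_cons //; case: s {IH}.
Qed.

Lemma vprod_eq0 l : 0 \in l -> vprod l = 0.
Proof.
elim: l => [//|z l IH]; rewrite inE => /orP[/eqP <-|hl].
  by case: l {IH} => //= *; rewrite !mul0mx.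
by case: l IH hl => // a l IH hl; rewrite vprod_cons // IH // mulmx0.
Qed.

Definition allZ (l : seq M) := forall z, z \in l -> isZ z.

Lemma allZ_cat s t : allZ s -> allZ t -> allZ (s ++ t).
Proof. by move=> hs ht z; rewrite mem_cat => /orP[]; auto. Qed.

Lemma allZ_cons z s : isZ z -> allZ s -> allZ (z :: s).
Proof. by move=> hz hs w; rewrite inE => /orP[/eqP->|]; auto. Qed.

Lemma allZ_consP z s : allZ (z :: s) -> isZ z /\ allZ s.
Proof. by move=> h; split => [|w hw]; apply: h; rewrite inE ?hw ?orbT ?eqxx. Qed.

Lemma allZ_rconsP s z : allZ (rcons s z) -> allZ s /\ isZ z.
Proof.
by rewrite -cats1 => h; split => [w hw|]; apply: h; rewrite mem_cat ?hw ?inE ?eqxx ?orbT.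
Qed.

Definition word n w :=
  exists l, [/\ allZ l, size l = n.+1 & w = vprod l].
Definition split_word n w :=
  exists l, [/\ allZ l, size l = n.+1,
    exists2 i, (0 < i < n)%N & nth 0 l i = P0 & w = vprod l].

Lemma split_wordW n w : split_word n w -> word n w.
Proof. by move=> [l [? ? _ ?]]; exists l. Qed.

Lemma word0 z : isZ z -> word 0 z.
Proof. by move=> hz; exists [:: z]; split => // w; rewrite inE => /eqP ->. Qed.

Inductive lspan (P : M -> Prop) : M -> Prop :=
| lspan0 : lspan P 0
| lspan_gen w : P w -> lspan P w
| lspanD x y : lspan P x -> lspan P y -> lspan P (x + y)
| lspanZ c x : lspan P x -> lspan P (c *: x).

Lemma lspanN P x : lspan P x -> lspan P (- x).
Proof. by rewrite -scaleN1r; apply: lspanZ. Qed.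

Lemma lspanB P x y : lspan P x -> lspan P y -> lspan P (x - y).
Proof. by move=> hx hy; apply: lspanD => //; apply: lspanN. Qed.

Lemma lspan_sum P I r (Q : pred I) (F : I -> M) :
  (forall i, Q i -> lspan P (F i)) -> lspan P (\sum_(i <- r | Q i) F i).
Proof. by move=> h; apply: big_ind => //; [apply: lspan0 | apply: lspanD]. Qed.

Lemma lspan_mono (P Q : M -> Prop) x :
  (forall w, P w -> Q w) -> lspan P x -> lspan Q x.
Proof.
move=> PQ; elim=> *; by [apply: lspan0 | apply: lspan_gen; auto | apply: lspanD | apply: lspanZ].
Qed.

Lemma lspan_mul (P Q R : M -> Prop) x y :
  (forall a b, P a -> Q b -> lspan R (a *m b)) ->
  lspan P x -> lspan Q y -> lspan R (x *m y).
Proof.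
move=> PQR hx; elim: hx y => [|a Pa|x1 x2 _ IH1 _ IH2|c x1 _ IH] y hy.
- by rewrite mul0mx; apply: lspan0.
- elim: hy => [|b Qb|y1 y2 _ IH1 _ IH2|c y1 _ IH].
  + by rewrite mulmx0; apply: lspan0.
  + exact: PQR.
  + by rewrite mulmxDr; apply: lspanD.
  + by rewrite -scalemxAr; apply: lspanZ.
- by rewrite mulmxDl; apply: lspanD; auto.
- by rewrite -scalemxAl; apply: lspanZ; auto.
Qed.



Lemma split_word_mulr a b w1 w2 :
  split_word a w1 -> word b w2 -> lspan (split_word (a + b)) (w1 *m w2).
Proof.
move=> [l1 [h1 s1 [i /andP[i0 ia] l1i] ->]] [l2 [h2 s2 ->]].
case/lastP: l1 h1 s1 l1i => // s x h1 s1 l1i; case: l2 h2 s2 => // y t h2 s2.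
have [hs hx] := allZ_rconsP h1; have [hy ht] := allZ_consP h2.
move: s1 s2; rewrite size_rcons /= => -[s1] -[s2].
rewrite vprod_cat; case: (isZ_mul hx hy) => hxy.
  by rewrite vprod_eq0 ?mem_cat ?inE ?hxy ?eqxx ?orbT //; apply: lspan0.
apply: lspan_gen; exists (s ++ x *m y :: t); split => //.
- by apply: allZ_cat => //; apply: allZ_cons.
- by rewrite size_cat /= s1 s2 addnS.
- exists i; first by rewrite i0 ltn_addr.
  by rewrite nth_cat s1 ia -l1i nth_rcons s1 ia.
Qed.

Lemma split_word_mull a b w1 w2 :
  word a w1 -> split_word b w2 -> lspan (split_word (a + b)) (w1 *m w2).
Proof.
move=> [l1 [h1 s1 ->]] [l2 [h2 s2 [i /andP[i0 ib] l2i] ->]].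
case/lastP: l1 h1 s1 => // s x h1 s1; case: l2 h2 s2 l2i => // y t h2 s2 l2i.
have [hs hx] := allZ_rconsP h1; have [hy ht] := allZ_consP h2.
move: s1 s2; rewrite size_rcons /= => -[s1] -[s2].
rewrite vprod_cat; case: (isZ_mul hx hy) => hxy.
  by rewrite vprod_eq0 ?mem_cat ?inE ?hxy ?eqxx ?orbT //; apply: lspan0.
apply: lspan_gen; exists (s ++ x *m y :: t); split => //.
- by apply: allZ_cat => //; apply: allZ_cons.
- by rewrite size_cat /= s1 s2 addnS.
- exists (a + i)%N; first by rewrite ltn_add2l ib andbT ltn_addl.
  rewrite nth_cat s1 ltnNge leq_addr /= addKn.
  by case: i i0 ib l2i.
Qed.

Definition eqmod n x y := lspan (split_word n) (x - y).

Lemma eqmod_refl n x : eqmod n x x.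
Proof. by rewrite /eqmod subrr; apply: lspan0. Qed.

Lemma eqmod_trans n x y z : eqmod n x y -> eqmod n y z -> eqmod n x z.
Proof. by move=> h1 h2; rewrite /eqmod -(subrKA y); apply: lspanD. Qed.

Lemma eqmodD n x y x' y' :
  eqmod n x x' -> eqmod n y y' -> eqmod n (x + y) (x' + y').
Proof. by move=> h1 h2; rewrite /eqmod opprD addrACA; apply: lspanD. Qed.

Lemma eqmodN n x x' : eqmod n x x' -> eqmod n (- x) (- x').
Proof. by rewrite /eqmod -opprD; apply: lspanN. Qed.

Lemma eqmodB n x y x' y' :
  eqmod n x x' -> eqmod n y y' -> eqmod n (x - y) (x' - y').
Proof. by move=> h1 h2; apply: eqmodD => //; apply: eqmodN. Qed.

Lemma eqmodZ n c x x' : eqmod n x x' -> eqmod n (c *: x) (c *: x').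
Proof. by rewrite /eqmod -scalerBr; apply: lspanZ. Qed.

Lemma eqmod_sum0 n I r (Q : pred I) (F : I -> M) :
  (forall i, Q i -> eqmod n (F i) 0) -> eqmod n (\sum_(i <- r | Q i) F i) 0.
Proof. by move=> h; rewrite /eqmod subr0; apply: lspan_sum => i /h; rewrite /eqmod subr0. Qed.

Lemma split_word_eqmod0 n w : split_word n w -> eqmod n w 0.
Proof. by rewrite /eqmod subr0; apply: lspan_gen. Qed.

Lemma eqmod_mull a b z x y :
  lspan (word a) z -> eqmod b x y -> eqmod (a + b) (z *m x) (z *m y).
Proof. by move=> hz h; rewrite /eqmod -mulmxBr; apply: lspan_mul hz h; apply: split_word_mull. Qed.

Lemma eqmod_mulr a b z x y :
  eqmod a x y -> lspan (word b) z -> eqmod (a + b) (x *m z) (y *m z).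
Proof. by move=> h hz; rewrite /eqmod -mulmxBl; apply: lspan_mul h hz; apply: split_word_mulr. Qed.

Lemma eqmod_lspan_word n x y : eqmod n x y -> lspan (word n) y -> lspan (word n) x.
Proof.
move=> h hy; rewrite -(subrK y x); apply: lspanD => //.
by apply: lspan_mono h => w; apply: split_wordW.
Qed.

Lemma eqmod_mul a b x x' y y' : eqmod a x x' -> eqmod b y y' ->
  lspan (word a) x' -> lspan (word b) y -> eqmod (a + b) (x *m y) (x' *m y').
Proof.
move=> hx hy wx' wy; apply: (@eqmod_trans _ _ (x' *m y)).
  exact: eqmod_mulr.
exact: eqmod_mull.
Qed.

Lemma eqmod_admx a b S S' X X' : eqmod a S S' -> eqmod b X X' ->
  lspan (word a) S' -> lspan (word b) X' -> eqmod (a + b) (admx S X) (admx S' X').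
Proof.
move=> hS hX wS wX; apply: eqmodB; first exact: eqmod_mul (eqmod_lspan_word hX wX).
by rewrite addnC; apply: eqmod_mul (eqmod_lspan_word hS wS).
Qed.

Definition gword x k y := vprod (x :: rcons (nseq k G) y).

Lemma allZ_gword x k y : isZ x -> isZ y -> allZ (x :: rcons (nseq k G) y).
Proof.
move=> hx hy z; rewrite inE mem_rcons inE => /or3P[/eqP->|/eqP->|] //.
by move/nseqP=> [-> _]; apply: isZ_G.
Qed.

Lemma gword_word x k y : isZ x -> isZ y -> lspan (word k.+1) (gword x k y).
Proof.
move=> hx hy; apply: lspan_gen; exists (x :: rcons (nseq k G) y); split => //.
  exact: allZ_gword.
by rewrite /= size_rcons size_nseq.
Qed.

Lemma gword_mull z x k y : z *m gword x k y = gword (z *m x) k y.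
Proof. exact: vprod_mull. Qed.

Lemma gword_mulr x k y z : gword x k y *m z = gword x k (y *m z).
Proof. exact: (vprod_mulr (x :: nseq k G)). Qed.

Lemma gword0l k y : gword 0 k y = 0.
Proof. by rewrite /gword vprod_eq0 // mem_head. Qed.

Lemma gword0r x k : gword x k 0 = 0.
Proof. by rewrite /gword vprod_eq0 // inE mem_rcons mem_head orbT. Qed.

Lemma gword_mul x a y x' b y' : gword x a y *m gword x' b y' =
   vprod ((x :: nseq a G) ++ (y *m x') :: rcons (nseq b G) y').
Proof. exact: (vprod_cat (x :: nseq a G)). Qed.

Lemma gword_mul0 x a y x' b y' : y *m x' = 0 -> gword x a y *m gword x' b y' = 0.
Proof. by move=> yx'; rewrite gword_mul yx' vprod_eq0 // mem_cat mem_head orbT. Qed.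

Lemma gword_mulG x a y x' b y' :
  y *m x' = G -> gword x a y *m gword x' b y' = gword x (a + b.+1) y'.
Proof. by move=> yx'; rewrite gword_mul yx' /gword /= -rcons_cons -rcons_cat nseqD. Qed.

Lemma gword_mulP0 x a y x' b y' : isZ x -> isZ y' -> y *m x' = P0 ->
  eqmod (a.+1 + b.+1) (gword x a y *m gword x' b y') 0.
Proof.
move=> hx hy' yx'; apply: split_word_eqmod0; rewrite gword_mul yx'.
exists ((x :: nseq a G) ++ P0 :: rcons (nseq b G) y'); split => //.
- apply: allZ_cat; last exact: allZ_gword isZ_P0 hy'.
  by apply: allZ_cons => // z /nseqP[-> _]; apply: isZ_G.
- by rewrite size_cat /= size_rcons !size_nseq addnS.
- exists a.+1; first by rewrite /= addSn ltnS addnS leq_addr.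
  by rewrite nth_cat /= size_nseq ltnn subnn.
Qed.

Lemma gword_mxpow x k y : gword x k y = x *m mxpow (V *m G) k *m V *m y.
Proof.
elim: k x => [|k IH] x; first by rewrite /= mulmx1.
rewrite /gword [nseq k.+1 G]/= vprod_cons // -/(gword G k y) IH mxpowS.
by rewrite !mulmxA.
Qed.

Local Notation Vd := (Vd P0 V).
Local Notation Vod := (Vod P0 V).
Local Notation Lsw := (Lsw P0 G).

Lemma VdE : Vd = gword P0 0 P0 + gword Q0 0 Q0. Proof. by []. Qed.
Lemma VodE : Vod = gword P0 0 Q0 + gword Q0 0 P0. Proof. by []. Qed.

Lemma Vd_word : lspan (word 1) Vd.
Proof. by rewrite VdE; apply: lspanD; apply: gword_word; rewrite /isZ; auto. Qed.

Lemma Vod_word : lspan (word 1) Vod.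
Proof. by rewrite VodE; apply: lspanD; apply: gword_word; rewrite /isZ; auto. Qed.

Lemma P0_word : lspan (word 0) P0. Proof. by apply/lspan_gen/word0/isZ_P0. Qed.
Lemma G_word : lspan (word 0) G. Proof. by apply/lspan_gen/word0/isZ_G. Qed.


Lemma Lsw0 : Lsw 0 = 0.
Proof. by rewrite /Lsw !(mulmx0, mul0mx) subrr. Qed.

Lemma eqmod_Lsw n x y : eqmod n x y -> eqmod n (Lsw x) (Lsw y).
Proof.
move=> h; rewrite /Lsw -(addn0 n).
have hP0 : eqmod n (P0 *m x) (P0 *m y) by rewrite -[n]add0n; apply: eqmod_mull P0_word h.
have hG : eqmod n (G *m x) (G *m y) by rewrite -[n]add0n; apply: eqmod_mull G_word h.
by apply: eqmodB; [apply: eqmod_mulr hP0 G_word | apply: eqmod_mulr hG P0_word].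
Qed.

Lemma eqmod_add0l n x y : eqmod n x 0 -> eqmod n (x + y) y.
Proof. by move=> h; rewrite -[X in eqmod _ _ X]add0r; apply: eqmodD h (eqmod_refl _ _). Qed.

Definition Tlead k := gword P0 k G - gword G k P0.
Definition Wlead k := gword P0 k P0.

Lemma Tlead_word k : lspan (word k.+1) (Tlead k).
Proof. by apply: lspanB; apply: gword_word; auto using isZ_P0, isZ_G. Qed.

Lemma Wlead_word k : lspan (word k.+1) (Wlead k).
Proof. by apply: gword_word; apply: isZ_P0. Qed.

Lemma Vd_Tlead k : eqmod k.+2 (Vd *m Tlead k) (- gword Q0 k.+1 P0).
Proof.
rewrite VdE /Tlead mulmxDl !mulmxBr (gword_mul0 _ _ _ _ P0G).
rewrite (gword_mul0 _ _ _ _ Q0P0) (gword_mulG _ _ _ _ Q0G) subr0 add0r.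
exact/eqmod_add0l/(@gword_mulP0 P0 0 P0 P0 k G isZ_P0 isZ_G P0_idem).
Qed.

Lemma Tlead_Vd k : eqmod k.+2 (Tlead k *m Vd) (gword P0 k.+1 Q0).
Proof.
rewrite VdE /Tlead mulmxBl !mulmxDr (gword_mul0 _ _ _ _ GP0).
rewrite (gword_mulG _ _ _ _ GQ0) (gword_mul0 _ _ _ _ P0Q0) add0r addr0 addn1.
rewrite -[X in eqmod _ _ X]subr0; apply: eqmodB; first exact: eqmod_refl.
by rewrite -addn1; apply: (@gword_mulP0 G k P0 P0 0 P0 isZ_G isZ_P0 P0_idem).
Qed.

Lemma Lsw_admx_Vd_Tlead k : eqmod k.+2 (Lsw (admx Vd (Tlead k))) (- Tlead k.+1).
Proof.
apply: eqmod_trans (eqmod_Lsw (eqmodB (Vd_Tlead k) (Tlead_Vd k))) _.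
rewrite /Lsw !(mulmxBr, mulmxBl, mulmxN, mulNmx) !gword_mull !gword_mulr.
rewrite P0Q0 Q0P0 P0_idem Q0G GQ0 gword0l gword0r /Tlead.
by rewrite oppr0 sub0r addr0 opprK opprB addrC; apply: eqmod_refl.
Qed.

Lemma admx_Tlead_Vod k : eqmod k.+2 (admx (Tlead k) Vod) (Wlead k.+1 + Wlead k.+1).
Proof.
have TV : eqmod k.+2 (Tlead k *m Vod) (Wlead k.+1).
  rewrite VodE /Tlead mulmxBl !mulmxDr (gword_mul0 _ _ _ _ GP0).
  rewrite (gword_mulG _ _ _ _ GQ0) (gword_mul0 _ _ _ _ P0Q0) add0r addr0 addn1.
  rewrite -[X in eqmod _ _ X]subr0; apply: eqmodB; first exact: eqmod_refl.
  by rewrite -addn1; apply: (@gword_mulP0 G k P0 P0 0 Q0 isZ_G isZ_Q0 P0_idem).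
have VT : eqmod k.+2 (Vod *m Tlead k) (- Wlead k.+1).
  rewrite VodE /Tlead mulmxDl !mulmxBr (gword_mul0 _ _ _ _ Q0P0).
  rewrite (gword_mulG _ _ _ _ Q0G) (gword_mul0 _ _ _ _ P0G) sub0r subr0 add0n addrC.
  exact/eqmod_add0l/(@gword_mulP0 Q0 0 P0 P0 k G isZ_Q0 isZ_G P0_idem).
by apply: eqmod_trans (eqmodB TV VT) _; rewrite opprK; apply: eqmod_refl.
Qed.

Lemma admx_Tlead_Wlead j b c : eqmod (j.+1 + b.+1) (admx (Tlead j) (c *: Wlead b)) 0.
Proof.
rewrite /admx -scalemxAr -scalemxAl -scalerBr -(scaler0 _ c); apply: eqmodZ.
rewrite /Tlead /Wlead mulmxBl mulmxBr (gword_mul0 _ _ _ _ GP0) (gword_mul0 _ _ _ _ P0G).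
rewrite sub0r subr0 -opprD -oppr0; apply: eqmodN; rewrite -[0]addr0.
apply: eqmodD; first exact: (@gword_mulP0 G j P0 P0 b P0 isZ_G isZ_P0 P0_idem).
by rewrite addnC; apply: (@gword_mulP0 P0 b P0 P0 j G isZ_P0 isZ_G P0_idem).
Qed.

Local Notation hatS := (hatS P0 V).

Lemma hatS1E (S : nat -> M) k : hatS S 1 k.+1 = admx (S k.+1) Vod.
Proof.
rewrite /= big_nat_recr //= subnn /= big1_seq ?add0r // => i.
rewrite mem_index_iota => /andP[_ /andP[_ ik]].
by rewrite subn_eq0 leqNgt ik /admx mulmx0 mul0mx subrr.
Qed.

Lemma hatS_S (S : nat -> M) k m :
  hatS S k.+1 m = \sum_(1 <= n < m.+1) admx (S n) (hatS S k (m - n)).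
Proof. by []. Qed.

Section LeadingTerms.
Variables (S : nat -> M) (K : nat).
Hypothesis S_eqmod : forall j, (j < K)%N -> eqmod j.+1 (S j.+1) (Tlead j).

Lemma hatS1_eqmod m : (m < K)%N ->
  eqmod m.+2 (hatS S 1 m.+1) (Wlead m.+1 + Wlead m.+1).
Proof.
move=> mK; rewrite hatS1E; apply: (eqmod_trans _ (admx_Tlead_Vod m)).
by have := eqmod_admx (S_eqmod mK) (eqmod_refl 1 _) (Tlead_word m) Vod_word; rewrite addn1.
Qed.

Lemma hatS_eqmod k m : (0 < k)%N -> (m <= K)%N ->
  exists c, eqmod m.+1 (hatS S k m) (c *: Wlead m) /\ ((1 < k)%N -> c = 0).
Proof.
elim: k m => [//|[_|k IHk]] m _ mK.
  case: m mK => [_|m mK].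
    by exists 0; rewrite scale0r /= big_geq //; split => //; apply: eqmod_refl.
  by exists 2; split => //; rewrite scaler_nat mulr2n; apply: hatS1_eqmod.
exists 0; split => //; rewrite scale0r hatS_S big_seq; apply: eqmod_sum0.
move=> i; rewrite mem_index_iota => /andP[i0 im]; case: i i0 im => // j _ jm.
have [c [hc _]] := IHk (m - j.+1)%N isT (leq_trans (leq_subr _ _) mK).
have -> : m.+1 = (j.+1 + (m - j.+1).+1)%N by rewrite addnS subnKC.
apply: (eqmod_trans _ (admx_Tlead_Wlead j (m - j.+1) c)).
have jK : (j < K)%N by rewrite ltnS in jm; apply: leq_trans jm mK.
exact: eqmod_admx (S_eqmod jK) hc (Tlead_word j) (lspanZ c (Wlead_word _)).
Qed.

Lemma hatS_eqmod0 k m : (1 < k)%N -> (m <= K)%N -> eqmod m.+1 (hatS S k m) 0.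
Proof.
move=> k1 mK; have [c [hc c0]] := hatS_eqmod (ltnW k1) mK.
by rewrite c0 ?scale0r in hc.
Qed.

End LeadingTerms.

Local Notation Ssw := (Ssw P0 G V).
Local Notation Slist := (Slist P0 G V).
Local Notation Snext := (Snext P0 G V).

Lemma SlistS n : Slist n.+1 = rcons (Slist n) (Snext (Slist n) n.+1).
Proof. by []. Qed.

Lemma size_Slist n : size (Slist n) = n.
Proof. by elim: n => //= n IH; rewrite size_rcons IH. Qed.

Lemma SswE n : Ssw n.+1 = Snext (Slist n) n.+1.
Proof. by rewrite /Defs.Ssw /Sof /= nth_rcons size_Slist ltnn eqxx. Qed.

Lemma nth_Slist d i : nth 0 (Slist (i.+1 + d)) i = nth 0 (Slist i.+1) i.
Proof.
elim: d => [|d IH]; first by rewrite addn0.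
by rewrite addnS SlistS nth_rcons size_Slist -addSn ltn_addr.
Qed.

Lemma Sof_Slist n i : (0 < i <= n)%N -> Sof (Slist n) i = Ssw i.
Proof. by case: i => // i /= hi; rewrite /Defs.Ssw /Sof /= -(subnKC hi) nth_Slist. Qed.

Lemma Ssw1 : Ssw 1 = Tlead 0.
Proof.
rewrite SswE /Snext eqxx VodE /Lsw !(mulmxDr, mulmxDl) !(gword_mull, gword_mulr).
by rewrite P0_idem Q0G GP0 Q0P0 P0Q0 P0G GQ0 !(gword0l, gword0r) addr0 add0r.
Qed.

Lemma Ssw_eqmod k : eqmod k.+1 (Ssw k.+1) (Tlead k).
Proof.
elim/ltn_ind: k => -[_|k IH]; first by rewrite Ssw1; apply: eqmod_refl.
rewrite SswE /Snext /= -(addr0 (Tlead k.+1)) -[Tlead _]opprK.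
have Sof_eqmod j : (j < k.+1)%N -> eqmod j.+1 (Sof (Slist k.+1) j.+1) (Tlead j).
  by move=> jk; rewrite Sof_Slist ?ltnS //; apply: IH.
apply: eqmodD.
  apply/eqmodN/(eqmod_trans _ (Lsw_admx_Vd_Tlead k))/eqmod_Lsw.
  by have := eqmod_admx (eqmod_refl 1 Vd) (Sof_eqmod k (ltnSn k)) Vd_word (Tlead_word k).
rewrite big_seq; apply: eqmod_sum0 => j.
rewrite mem_index_iota => /andP[j0 _].
rewrite -(scaler0 _ (acoef (2 * j))) -Lsw0; apply/eqmodZ/eqmod_Lsw.
by apply: (hatS_eqmod0 Sof_eqmod _ (leqnn _)); lia.
Qed.

Lemma eqmod_P0 n x y : eqmod n x y -> eqmod n (P0 *m x *m P0) (P0 *m y *m P0).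
Proof.
move=> h; rewrite -(addn0 n) -{1}[n]add0n.
by apply: eqmod_mulr P0_word; apply: eqmod_mull P0_word h.
Qed.

Lemma P0_Wlead k : P0 *m Wlead k *m P0 = Wlead k.
Proof. by rewrite gword_mull gword_mulr P0_idem. Qed.

Lemma P0_Heff q : P0 *m Heff P0 G V q *m P0 = Heff P0 G V q.
Proof.
rewrite /Heff mulmx_sumr mulmx_suml; apply: eq_bigr => j _.
by rewrite -scalemxAr -scalemxAl !mulmxA P0_idem -!mulmxA P0_idem.
Qed.

Lemma Heff_eqmod q : (1 < q)%N -> eqmod q (Heff P0 G V q) (Wlead q.-1).
Proof.
case: q => [|[|m]] // _; rewrite /Heff big_ltn //= -[Wlead _]addr0.
have Ssw_eqmod' j : (j < m.+1)%N -> eqmod j.+1 (Ssw j.+1) (Tlead j) by move=> _; apply: Ssw_eqmod.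
apply: eqmodD.
  have := eqmodZ (bcoef 1) (eqmod_P0 (hatS1_eqmod Ssw_eqmod' (ltnSn m))).
  rewrite mulmxDr mulmxDl P0_Wlead scalerDr -scalerDl bcoef1.
  by rewrite (_ : 2^-1 + 2^-1 = 1 :> algC) ?scale1r //; field.
rewrite big_seq; apply: eqmod_sum0 => j; rewrite mem_index_iota => /andP[j1 _].
have j3 : (1 < (2 * j).-1)%N by lia.
rewrite -(scaler0 _ (bcoef j)); apply: eqmodZ.
by have := eqmod_P0 (hatS_eqmod0 Ssw_eqmod' j3 (leqnn _)); rewrite mulmx0 mul0mx.
Qed.

Lemma chain_vprod zs : chain P0 V zs = vprod (P0 :: rcons zs P0).
Proof.
have step X x y : foldl (fun acc Z => acc *m Z *m V) (X *m x *m V) zs *m y =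
    X *m vprod (x :: rcons zs y).
  elim: zs X x => [|z zs IH] X x; first by rewrite /= !mulmxA.
  by rewrite [foldl _ _ _]/= IH [vprod (x :: _)]vprod_cons // !mulmxA.
by rewrite /chain -[P0 in P0 *m V]mul1mx step mul1mx.
Qed.

Definition multiple_of_P0 X := exists c : algC, X = c *: P0.

Lemma multiple_of_P0_lspan (P : M -> Prop) x :
  (forall w, P w -> multiple_of_P0 (P0 *m w *m P0)) ->
  lspan P x -> multiple_of_P0 (P0 *m x *m P0).
Proof.
move=> hP; elim => [|w /hP //|a b _ [c ea] _ [d eb]|c a _ [d ea]].
- by exists 0; rewrite mulmx0 mul0mx scale0r.
- by exists (c + d); rewrite mulmxDr mulmxDl ea eb scalerDl.
- by exists (c * d); rewrite -scalemxAr -scalemxAl ea scalerA.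
Qed.

Variable L : nat.
Hypothesis chain_P0 : forall (n : nat) (zs : seq M),
  (1 <= n < L)%N -> size zs = n.-1 -> (forall i, (i < size zs)%N -> isZ (nth 0 zs i)) ->
  multiple_of_P0 (chain P0 V zs).

Lemma P0_word_P0 n w : (1 <= n < L)%N -> word n w -> multiple_of_P0 (P0 *m w *m P0).
Proof.
move=> nL [l [hl sl ->]]; case: l hl sl => [//|x l] hl sl.
case/lastP: l hl sl => [|zs y] hl sl.
  by move: sl nL => /= [<-].
have [hx /allZ_rconsP [hzs hy]] := allZ_consP hl.
rewrite vprod_mull -rcons_cons vprod_mulr rcons_cons.
case: (P0_mul_isZ hx) => ->; last by rewrite vprod_eq0 ?mem_head //; exists 0; rewrite scale0r.
case: (isZ_mul_P0 hy) => ->; last first.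
  by rewrite vprod_eq0 ?inE ?mem_rcons ?mem_head ?orbT //; exists 0; rewrite scale0r.
rewrite -chain_vprod; apply: (chain_P0 nL); first by move: sl; rewrite /= size_rcons => -[<-].
by move=> i hi; apply/hzs/mem_nth.
Qed.

Lemma P0_split_word_P0 w : split_word L w -> multiple_of_P0 (P0 *m w *m P0).
Proof.
move=> [l [hl sl [i /andP[i0 iL] li] ->]].
have il : (i < size l)%N by rewrite sl ltnS ltnW.
set l1 := rcons (take i l) P0; set l2 := P0 :: drop i.+1 l.
have -> : vprod l = vprod l1 *m vprod l2.
  by rewrite vprod_cat P0_idem -li -drop_nth // cat_take_drop.
have w1 : word i (vprod l1).
  exists l1; split; last by [].
    by move=> z; rewrite mem_rcons inE => /orP[/eqP->|/mem_take/hl//]; apply: isZ_P0.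
  by rewrite size_rcons size_take il.
have w2 : word (L - i) (vprod l2).
  exists l2; split; last by [].
    by move=> z; rewrite inE => /orP[/eqP->|/mem_drop/hl//]; apply: isZ_P0.
  by rewrite /= size_drop sl subSS.
have [c1 e1] := P0_word_P0 (n := i) (ltac:(lia)) w1.
have [c2 e2] := P0_word_P0 (n := L - i) (ltac:(lia)) w2.
exists (c1 * c2).
have -> : P0 *m (vprod l1 *m vprod l2) *m P0 =
    (P0 *m vprod l1 *m P0) *m (P0 *m vprod l2 *m P0).
  have A_P0 : vprod l1 *m P0 = vprod l1 by rewrite vprod_mulr P0_idem.
  have P0_B : P0 *m vprod l2 = vprod l2 by rewrite vprod_mull P0_idem.
  by rewrite -{1}A_P0 -{1}P0_B !mulmxA.
by rewrite e1 e2 -scalemxAl -scalemxAr P0_idem scalerA.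
Qed.

Lemma Heff_multiple_of_P0 q : (2 <= q < L)%N -> multiple_of_P0 (Heff P0 G V q).
Proof.
case: q => [|[|m]] // /andP[_ mL]; rewrite -P0_Heff.
apply: (@multiple_of_P0_lspan (word m.+2)) => [w|]; first exact: P0_word_P0.
exact: eqmod_lspan_word (Heff_eqmod _) (Wlead_word _).
Qed.

Lemma Heff_sub_Wlead : (1 < L)%N -> multiple_of_P0 (Heff P0 G V L - Wlead L.-1).
Proof.
move=> L1; rewrite -P0_Heff -(P0_Wlead L.-1) -mulmxBl -mulmxBr.
exact: multiple_of_P0_lspan P0_split_word_P0 (Heff_eqmod L1).
Qed.

End Words.

Theorem theorem2 (N : nat) (H0 V P0 G : 'M[algC]_N) (E0 : algC) (L : nat) :
  (* H0, V Hermitian *)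
  is_hermitian_op H0 -> is_hermitian_op V ->
  (* E0 is the ground energy (smallest eigenvalue) of H0 *)
  eigenvalue H0 E0 -> (forall l : algC, eigenvalue H0 l -> E0 <= l) ->
  (* P0 is the orthogonal projection onto the ground space ker (H0 - E0) *)
  P0 *m P0 = P0 -> is_hermitian_op P0 ->
  H0 *m P0 = E0 *: P0 ->
  (forall v : 'cV[algC]_N, H0 *m v = E0 *: v -> P0 *m v = v) ->
  (* G = Q0 (E0 I - H0)^{-1} Q0, the inverse taken on the range of Q0 *)
  Q0 P0 *m G = G -> G *m Q0 P0 = G ->
  G *m (E0%:M - H0) = Q0 P0 -> (E0%:M - H0) *m G = Q0 P0 ->
  (2 <= L)%N ->
  (forall (n : nat) (zs : seq 'M[algC]_N),
      (1 <= n < L)%N -> size zs = n.-1 -> (forall i, (i < size zs)%N -> isZ P0 G (nth 0 zs i)) ->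
      exists c : algC, chain P0 V zs = c *: P0) ->
  (exists c : algC, P0 *m V *m P0 = c *: P0) /\
  (forall q : nat, (2 <= q < L)%N -> exists c : algC, Heff P0 G V q = c *: P0) /\
  (exists c : algC,
      Heff P0 G V L = P0 *m mxpow (V *m G) L.-1 *m V *m P0 + c *: P0).
Proof.
move=> _ _ _ _ P0_idem _ _ _ Q0G GQ0 _ _ L2 chain_P0.
split; first exact: (chain_P0 1%N [::]).
split=> [q qL|]; first exact: (Heff_multiple_of_P0 (V := V) P0_idem Q0G GQ0 chain_P0 qL).
have [c hc] := Heff_sub_Wlead (V := V) P0_idem Q0G GQ0 chain_P0 L2.
by exists c; rewrite -gword_mxpow -hc addrC subrK.
Qed.
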